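(* Assume Assumptions B and C hold, let $w^{(t)}$ be generated by Algorithm 2 and $\eta^{(t)}=D\sqrt{\varepsilon}$ for some $D>0$. Then for all $i\in[n]$ and $0\le t<T$, $$\|\epsilon_i^{(t)}\|^2\le c\big(2+(V+\varepsilon^2+2)GD^2\big)^2\varepsilon^2.$$
   Context: Let $n,c,d$ be positive integers and $[n]=\{1,\dots,n\}$. For each $i\in[n]$ let $h(\cdot;i):\mathbb{R}^d\to\mathbb{R}^c$ (components $h_j(\cdot;i)$) and $\phi_i:\mathbb{R}^c\to\mathbb{R}$ differentiable. Norms: Euclidean for vectors, operator for matrices. Assumption B: each $h(\cdot;i)$ is twice continuously differentiable and there is $G>0$ with $\|\nabla_w^2 h_j(w;i)\|\le G$ for all $w,i,j$. Iteration setup: given $\varepsilon>0$, $\eta^{(t)}>0$, $\alpha_i^{(t)}>0$ and iterates $w^{(t)}$, let $H_i^{(t)}$ be the Jacobian of $h(\cdot;i)$ at $w^{(t)}$, $\Phi^{(t)}(v)=\frac{1}{2n}\sum_{i=1}^n\|\eta^{(t)}H_i^{(t)}v-\alpha_i^{(t)}\nabla\phi_i(h(w^{(t)};i))\|^2$, $\Psi^{(t)}(v)=\Phi^{(t)}(v)+\frac{\varepsilon^2}{2}\|v\|^2$, $v_{*\mathrm{reg}}^{(t)}$ its unique minimizer. Algorithm 2: $w^{(t+1)}=w^{(t)}-\eta^{(t)}v^{(t)}$ where $\|v^{(t)}-v_{*\mathrm{reg}}^{(t)}\|\le\varepsilon$, $t=0,\dots,T-1$. Assumption C (constant $V>0$):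 for each $0\le t<T$ there is $\hat v^{(t)}$ with $\|\hat v^{(t)}\|^2\le V$ and $\Phi^{(t)}(\hat v^{(t)})\le\varepsilon^2$. Error vector: $\epsilon_i^{(t)}=h(w^{(t+1)};i)-h(w^{(t)};i)+\eta^{(t)}H_i^{(t)}v^{(t)}\in\mathbb{R}^c$. *)

From HB Require Import structures.
From mathcomp Require Import all_boot all_order all_algebra.
From mathcomp Require Import all_classical all_reals all_analysis.
Set Implicit Arguments. Unset Strict Implicit. Unset Printing Implicit Defensive.
Import Order.TTheory GRing.Theory Num.Theory.
Import numFieldNormedType.Exports.
Local Open Scope classical_set_scope.
Local Open Scope ring_scope.

Definition enorm (R : realType) (k : nat) (v : 'rV[R]_k) : R :=
  Num.sqrt (\sum_(l < k) v 0 l ^+ 2).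

Definition opnorm (R : realType) (k : nat) (A : 'M[R]_k) : R :=
  sup [set enorm (u *m A) | u in [set u : 'rV[R]_k | enorm u <= 1]].

Definition grad (R : realType) (k : nat) (g : 'rV[R]_k -> R) (w : 'rV[R]_k)
  : 'rV[R]_k := \row_(l < k) ('d g w (delta_mx 0 l)).

Definition hessian (R : realType) (k : nat) (g : 'rV[R]_k -> R) (w : 'rV[R]_k)
  : 'M[R]_k := lin1_mx ('d (grad g) w).

Definition C2 (R : realType) (k : nat) (g : 'rV[R]_k -> R) : Prop :=
  (forall w, differentiable g w) /\
  (forall w, differentiable (grad g) w) /\
  continuous (hessian g).

Definition comp_fun (R : realType) (k m : nat) (f : 'rV[R]_k -> 'rV[R]_m)
  (j : 'I_m) : 'rV[R]_k -> R := fun w => f w 0 j.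

Definition jvp (R : realType) (k m : nat) (f : 'rV[R]_k -> 'rV[R]_m)
  (w v : 'rV[R]_k) : 'rV[R]_m := 'd f w v.

Definition Phi (R : realType) (n c d : nat) (h : 'I_n -> 'rV[R]_d -> 'rV[R]_c)
  (phi : 'I_n -> 'rV[R]_c -> R) (eta : nat -> R) (alpha : 'I_n -> nat -> R)
  (w : nat -> 'rV[R]_d) (t : nat) (v : 'rV[R]_d) : R :=
  (2 * n%:R)^-1 * \sum_(i < n)
    enorm (eta t *: jvp (h i) (w t) v - alpha i t *: grad (phi i) (h i (w t))) ^+ 2.

Definition Psi (R : realType) (n c d : nat) (h : 'I_n -> 'rV[R]_d -> 'rV[R]_c)
  (phi : 'I_n -> 'rV[R]_c -> R) (eta : nat -> R) (alpha : 'I_n -> nat -> R)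
  (w : nat -> 'rV[R]_d) (eps : R) (t : nat) (v : 'rV[R]_d) : R :=
  Phi h phi eta alpha w t v + eps ^+ 2 / 2 * enorm v ^+ 2.

Definition err_vec (R : realType) (n c d : nat) (h : 'I_n -> 'rV[R]_d -> 'rV[R]_c)
  (eta : nat -> R) (w v : nat -> 'rV[R]_d) (i : 'I_n) (t : nat) : 'rV[R]_c :=
  h i (w t.+1) - h i (w t) + eta t *: jvp (h i) (w t) (v t).

From HB Require Import structures.
From mathcomp Require Import all_boot all_order all_algebra.
From mathcomp Require Import all_classical all_reals all_analysis.
From mathcomp Require Import ring lra.
Import Order.TTheory GRing.Theory Num.Theory.
Import numFieldNormedType.Exports.
Local Open Scope classical_set_scope.
Local Open Scope ring_scope.

(* Each coordinate of the error vector is the second-order Taylor remainder of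
   h_j(.; i) at w^(t) in the direction q = - eta v^(t), so it is bounded by
   G/2 |q|^2 = G D^2 eps |v^(t)|^2 / 2.  Comparing Psi at its minimiser with
   Psi at the point of Assumption C gives |v_reg|^2 <= V + 2, hence
   |v^(t)|^2 <= 2 (V + eps^2 + 2); summing the c squared coordinates concludes. *)

Set Implicit Arguments. Unset Strict Implicit.

Section EuclideanNorm.
Variable R : realType.
Implicit Types (k : nat).

Lemma enorm_ge0 k (v : 'rV[R]_k) : 0 <= enorm v.
Proof. exact: sqrtr_ge0. Qed.

Lemma enorm_sqr k (v : 'rV[R]_k) : enorm v ^+ 2 = \sum_(l < k) v 0 l ^+ 2.
Proof. by rewrite /enorm sqr_sqrtr // sumr_ge0 // => l _; exact: sqr_ge0. Qed.

Lemma enormZ k (a : R) (v : 'rV[R]_k) : enorm (a *: v) = `|a| * enorm v.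
Proof.
rewrite /enorm -sqrtr_sqr -sqrtrM ?sqr_ge0 // mulr_sumr.
by congr Num.sqrt; apply: eq_bigr => l _; rewrite mxE exprMn.
Qed.

Lemma enormN k (v : 'rV[R]_k) : enorm (- v) = enorm v.
Proof. by rewrite -scaleN1r enormZ normrN1 mul1r. Qed.

Lemma enorm_sqrD_le k (a b : 'rV[R]_k) :
  enorm (a + b) ^+ 2 <= 2 * enorm a ^+ 2 + 2 * enorm b ^+ 2.
Proof.
rewrite !enorm_sqr !mulr_sumr -big_split /=; apply: ler_sum => l _; rewrite mxE.
have := sqr_ge0 (a 0 l - b 0 l); nra.
Qed.

Lemma coord_sqr_le_enorm k (v : 'rV[R]_k) l : v 0 l ^+ 2 <= enorm v ^+ 2.
Proof.
by rewrite enorm_sqr (bigD1 l) //= lerDl sumr_ge0 // => i _; exact: sqr_ge0.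
Qed.

Lemma enorm_eq0 k (v : 'rV[R]_k) : enorm v = 0 -> v = 0.
Proof.
move=> v0; apply/matrixP => i l; rewrite mxE ord1.
have := coord_sqr_le_enorm v l; rewrite v0 expr0n /= => vl0.
by apply/eqP; rewrite -sqrf_eq0 eq_le vl0 sqr_ge0.
Qed.

Lemma enorm_le_sum_norm k (v : 'rV[R]_k) : enorm v <= \sum_(l < k) `|v 0 l|.
Proof.
have S0 : 0 <= \sum_(l < k) `|v 0 l| by apply: sumr_ge0 => *.
rewrite /enorm -(ger0_norm S0) -sqrtr_sqr ler_sqrt ?sqr_ge0 //.
rewrite expr2 mulr_sumr ler_sum // => l _.
have vl : `|v 0 l| <= \sum_(l < k) `|v 0 l|.
  by rewrite (bigD1 l) //= lerDl sumr_ge0.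
by rewrite -real_normK ?num_real // expr2 ler_wpM2r.
Qed.

Lemma enorm_sqr_le_coord k (v : 'rV[R]_k) (B : R) :
  (forall l, `|v 0 l| <= B) -> enorm v ^+ 2 <= k%:R * B ^+ 2.
Proof.
move=> vB; rewrite enorm_sqr.
have -> : k%:R * B ^+ 2 = \sum_(l < k) B ^+ 2 by rewrite sumr_const card_ord mulr_natl.
apply: ler_sum => l _; rewrite -real_normK ?num_real //.
by rewrite ler_sqr ?nnegrE // (le_trans _ (vB l)).
Qed.

Lemma sum_mul_le_amgm k (x y : 'rV[R]_k) (s : R) : 0 < s ->
  `|\sum_(l < k) x 0 l * y 0 l| <= (s * enorm x ^+ 2 + s^-1 * enorm y ^+ 2) / 2.
Proof.
move=> s0.
have amgm a b : a * b <= (s * a ^+ 2 + s^-1 * b ^+ 2) / 2.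
  have : 0 <= s^-1 * (s * a - b) ^+ 2 by rewrite mulr_ge0 ?sqr_ge0 ?invr_ge0 ?ltW.
  have -> : s^-1 * (s * a - b) ^+ 2 = s * a ^+ 2 - 2 * (a * b) + s^-1 * b ^+ 2.
    by field; rewrite gt_eqF.
  lra.
rewrite !enorm_sqr !mulr_sumr -big_split /= mulr_suml ler_norml; apply/andP; split.
- rewrite -sumrN ler_sum // => l _.
  by rewrite lerNl -mulNr (le_trans (amgm _ _)) // sqrrN.
- by rewrite ler_sum // => l _; exact: amgm.
Qed.

Lemma enorm_sqr_le_dist k (a b : 'rV[R]_k) (e : R) :
  enorm (a - b) <= e -> enorm a ^+ 2 <= 2 * enorm b ^+ 2 + 2 * e ^+ 2.
Proof.
move=> abe; rewrite -[a](subrK b) addrC (le_trans (enorm_sqrD_le _ _)) //.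
by rewrite lerD2l ler_pM2l // ler_sqr ?nnegrE ?enorm_ge0 // (le_trans _ abe) ?enorm_ge0.
Qed.

End EuclideanNorm.

Section OperatorNorm.
Variables (R : realType) (k : nat).

Lemma opnorm_has_ubound (A : 'M[R]_k) :
  has_ubound [set enorm (u *m A) | u in [set u : 'rV[R]_k | enorm u <= 1]].
Proof.
exists (\sum_(l < k) \sum_(i < k) `|A i l|) => _ [u /= u1 <-].
apply: (le_trans (enorm_le_sum_norm _)); apply: ler_sum => l _.
rewrite mxE; apply: (le_trans (ler_norm_sum _ _ _)); apply: ler_sum => i _.
rewrite normrM -[leRHS]mul1r ler_wpM2r //.
have ui : `|u 0 i| ^+ 2 <= 1.
  rewrite real_normK ?num_real // (le_trans (coord_sqr_le_enorm _ _)) //.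
  by rewrite expr_le1 ?enorm_ge0.
by rewrite -(expr_le1 (n := 2)).
Qed.

Lemma enorm_mul_le_opnorm (A : 'M[R]_k) (u : 'rV[R]_k) :
  enorm (u *m A) <= opnorm A * enorm u.
Proof.
have [u0|] := eqVneq (enorm u) 0.
  rewrite u0 mulr0 (enorm_eq0 u0) mul0mx /enorm big1 ?sqrtr0 // => l _.
  by rewrite mxE expr0n.
rewrite neq_lt ltNge enorm_ge0 /= => u_gt0.
have unit_u : enorm ((enorm u)^-1 *: u) <= 1.
  by rewrite enormZ ger0_norm ?invr_ge0 ?enorm_ge0 // mulVf ?gt_eqF.
have /(ub_le_sup (opnorm_has_ubound A)) :
    [set enorm (u *m A) | u in [set u | enorm u <= 1]]
      (enorm (((enorm u)^-1 *: u) *m A)) by exists ((enorm u)^-1 *: u).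
rewrite -scalemxAl enormZ ger0_norm ?invr_ge0 ?enorm_ge0 //.
by rewrite mulrC ler_pdivrMr.
Qed.

End OperatorNorm.

Section Taylor.
Variable R : realType.

Lemma taylor1_le (F F' F'' : R -> R) (M : R) :
  (forall r : R, is_derive r (1 : R) F (F' r)) ->
  (forall r : R, is_derive r (1 : R) F' (F'' r)) ->
  (forall r, `|F'' r| <= M) ->
  `|F 1 - F 0 - F' 0| <= M / 2.
Proof.
move=> dF dF' F''M.
have F'_lip s : 0 <= s -> `|F' s - F' 0| <= M * s.
  move=> s0; have cF' : {within `[0, s], continuous F'}.
    by apply: derivable_within_continuous => r _; exact: ex_derive.
  have [r _ ->] := MVT_segment s0 (fun r _ => dF' r) cF'.
  by rewrite subr0 normrM (ger0_norm s0) ler_wpM2r.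
(* For m = M and m = -M this bounds the remainder from above and below. *)
have remainder m : exists2 r, 0 <= r &
    F 1 - F 0 - F' 0 - m / 2 = F' r - F' 0 - m * r.
  pose P := F - (fun r => r * F' 0) - (fun r => m / 2 * r ^+ 2).
  have dP (r : R) : is_derive r (1 : R) P (F' r - F' 0 - m * r).
    by apply: is_derive_eq; rewrite /GRing.scale /=; field.
  have cP : {within `[0, 1], continuous P}.
    by apply: derivable_within_continuous => r _; exact: ex_derive.
  have [r /andP[r0 _] Pr] := MVT_segment ler01 (fun r _ => dP r) cP.
  exists r => //; rewrite subr0 mulr1 in Pr.
  by rewrite -Pr /P !fctE expr1n expr0n /=; ring.
have [r1 r10 upper] := remainder M; have [r2 r20 lower] := remainder (- M).
have := F'_lip r1 r10; have := F'_lip r2 r20.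
rewrite !ler_norml => /andP[? ?] /andP[? ?].
by apply/andP; split; lra.
Qed.

Lemma is_derive_line (V : normedModType R) (f : V -> R) (x q : V) (s : R) :
  derivable f (s *: q + x) q ->
  is_derive s 1 (fun r : R => f (r *: q + x)) ('D_q f (s *: q + x)).
Proof.
move=> df.
have E : (fun h : R => h^-1 *: (((fun r : R => f (r *: q + x)) \o shift s) (h *: 1)
            - f (s *: q + x))) =
         (fun h : R => h^-1 *: ((f \o shift (s *: q + x)) (h *: q) - f (s *: q + x))).
  apply: funext => h /=; congr (_ *: (f _ - _)).
  by rewrite [h *: 1]mulr1 scalerDl addrA.
split; first by rewrite /derivable E.
by rewrite /derive E.
Qed.

End Taylor.

Definition quad_form (R : pzRingType) (k : nat) (A : 'M[R]_k) (q : 'rV[R]_k) : R :=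
  \sum_(l < k) q 0 l * (q *m A) 0 l.

Section SecondOrder.
Variables (R : realType) (k : nat).
Implicit Types (g : 'rV[R]_k -> R) (x q z : 'rV[R]_k).

Lemma quad_form_le_opnorm (A : 'M[R]_k) q (G : R) :
  0 < G -> opnorm A <= G -> `|quad_form A q| <= G * enorm q ^+ 2.
Proof.
move=> G0 AG; apply: le_trans (sum_mul_le_amgm _ _ G0) _.
have qA : enorm (q *m A) <= G * enorm q.
  by rewrite (le_trans (enorm_mul_le_opnorm _ _)) // ler_wpM2r ?enorm_ge0.
have qA2 : G^-1 * enorm (q *m A) ^+ 2 <= G * enorm q ^+ 2.
  rewrite ler_pdivrMl // mulrA -expr2 -exprMn ler_sqr ?nnegrE ?enorm_ge0 //.
  by rewrite mulr_ge0 ?enorm_ge0 ?ltW.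
lra.
Qed.

Lemma is_derive_directional_derive g q z :
  (forall w, differentiable g w) -> differentiable (grad g) z ->
  is_derive z q (fun y => 'D_q g y) (quad_form (hessian g z) q).
Proof.
move=> dg dG.
have -> : (fun y => 'D_q g y) = \sum_(l < k) (q 0 l \*: (fun y => grad g y 0 l)).
  apply: funext => y; rewrite fct_sumE (deriveE _ (dg y)).
  rewrite {1}(row_sum_delta q) linear_sum; apply: eq_bigr => l _.
  by rewrite linearZ /= /grad mxE.
apply: is_derive_sum => l; apply: is_deriveZ.
have dGq := diff_derivable (v := q) dG.
apply: DeriveDef; first by move: dGq => /derivable_mxP; apply.
have := congr1 (fun M : 'M[R]_(1, k) => M 0 l) (derive_mx dGq).
by rewrite mxE /= => <-; rewrite (deriveE _ dG) /hessian mul_rV_lin1.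
Qed.

Lemma taylor_hessian_le g x q (G : R) :
  (forall w, differentiable g w) -> (forall w, differentiable (grad g) w) ->
  0 < G -> (forall z, opnorm (hessian g z) <= G) ->
  `|g (q + x) - g x - 'd g x q| <= G * enorm q ^+ 2 / 2.
Proof.
move=> dg dG G0 HG.
pose F r := g (r *: q + x).
pose F' r := 'D_q g (r *: q + x).
have dF (r : R) : is_derive r (1 : R) F (F' r).
  exact: is_derive_line (diff_derivable (dg _)).
have dF' (r : R) : is_derive r (1 : R) F'
    (quad_form (hessian g (r *: q + x)) q).
  have [dD D_val] := is_derive_directional_derive q (z := r *: q + x) dg (dG _).
  by rewrite -D_val; exact: (is_derive_line (f := fun y => 'D_q g y)).
have := taylor1_le dF dF' (fun r => quad_form_le_opnorm q G0 (HG _)).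
by rewrite /F /F' scale1r !scale0r add0r deriveE.
Qed.

End SecondOrder.

Section RowFunctions.
Variables (R : realType) (k m : nat) (f : 'rV[R]_k -> 'rV[R]_m) (x : 'rV[R]_k).
Hypothesis df : forall j, differentiable (comp_fun f j) x.

Lemma differentiable_rV : differentiable f x.
Proof.
have -> : f = \sum_(j < m) (fun w => comp_fun f j w *: ('e_j : 'rV[R]_m)).
  by apply: funext => w; rewrite fct_sumE {1}(row_sum_delta (f w)).
by apply: differentiable_sum => j; exact: differentiableZl.
Qed.

Lemma jvp_coord u j : jvp f x u 0 j = 'd (comp_fun f j) x u.
Proof.
have dfu := diff_derivable (v := u) differentiable_rV.
rewrite /jvp -(deriveE _ differentiable_rV).
have := congr1 (fun M : 'M[R]_(1, m) => M 0 j) (derive_mx dfu).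
by rewrite mxE /= => ->; exact: deriveE (df j).
Qed.

End RowFunctions.

Section Algorithm2.
Variables (R : realType) (n c d : nat).
Variables (h : 'I_n -> 'rV[R]_d -> 'rV[R]_c) (phi : 'I_n -> 'rV[R]_c -> R).
Variables (eta : nat -> R) (alpha : 'I_n -> nat -> R) (w v : nat -> 'rV[R]_d).

Lemma Phi_ge0 t u : 0 <= Phi h phi eta alpha w t u.
Proof.
by rewrite mulr_ge0 ?invr_ge0 ?mulr_ge0 ?ler0n ?sumr_ge0 // => i _; exact: sqr_ge0.
Qed.

Lemma Psi_argmin_enorm_le (eps V : R) t (vr vh : 'rV[R]_d) : 0 < eps ->
  (forall u, Psi h phi eta alpha w eps t vr <= Psi h phi eta alpha w eps t u) ->
  enorm vh ^+ 2 <= V -> Phi h phi eta alpha w t vh <= eps ^+ 2 ->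
  enorm vr ^+ 2 <= V + 2.
Proof.
move=> eps0 vr_min vhV Phivh; have := vr_min vh; rewrite /Psi.
have := Phi_ge0 t vr; have e2 : 0 < eps ^+ 2 by rewrite exprn_gt0.
move: e2 vhV Phivh; set E := eps ^+ 2; nra.
Qed.

Lemma err_vec_coord_le (G : R) i t j : 0 < G ->
  (forall j, C2 (comp_fun (h i) j)) ->
  (forall j z, opnorm (hessian (comp_fun (h i) j) z) <= G) ->
  w t.+1 = w t - eta t *: v t ->
  `|err_vec h eta w v i t 0 j| <= G * (eta t ^+ 2 * enorm (v t) ^+ 2) / 2.
Proof.
move=> G0 hC2 HG wS; have [dg [dG _]] := hC2 j.
have := taylor_hessian_le (w t) (- (eta t *: v t)) dg dG G0 (HG j).
rewrite /err_vec !mxE wS jvp_coord => [|j']; last exact: (hC2 j').1.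
rewrite linearN linearZ /= opprK [w t + _]addrC.
by rewrite enormZ enormN exprMn real_normK ?num_real // linearZ.
Qed.

End Algorithm2.

Theorem mainTheorem15 (R : realType) (n c d : nat)
  (h : 'I_n -> 'rV[R]_d -> 'rV[R]_c) (phi : 'I_n -> 'rV[R]_c -> R)
  (G V D eps : R) (T : nat)
  (eta : nat -> R) (alpha : 'I_n -> nat -> R)
  (w v vreg : nat -> 'rV[R]_d) :
  (0 < n)%N -> (0 < c)%N -> (0 < d)%N ->
  (forall i z, differentiable (phi i) z) ->
  (* Assumption B *)
  0 < G ->
  (forall i j, C2 (comp_fun (h i) j)) ->
  (forall i j x, opnorm (hessian (comp_fun (h i) j) x) <= G) ->
  (* iteration setup *)
  0 < eps ->
  (forall t, 0 < eta t) ->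
  (forall i t, 0 < alpha i t) ->
  (forall t, (t < T)%N ->
     forall u, Psi h phi eta alpha w eps t (vreg t) <= Psi h phi eta alpha w eps t u) ->
  (* Algorithm 2 *)
  (forall t, (t < T)%N -> w t.+1 = w t - eta t *: v t) ->
  (forall t, (t < T)%N -> enorm (v t - vreg t) <= eps) ->
  (* Assumption C *)
  0 < V ->
  (forall t, (t < T)%N -> exists vh : 'rV[R]_d,
       enorm vh ^+ 2 <= V /\ Phi h phi eta alpha w t vh <= eps ^+ 2) ->
  (* step size *)
  0 < D ->
  (forall t, eta t = D * Num.sqrt eps) ->
  forall (i : 'I_n) (t : nat), (t < T)%N ->
    enorm (err_vec h eta w v i t) ^+ 2
      <= c%:R * (2 + (V + eps ^+ 2 + 2) * G * D ^+ 2) ^+ 2 * eps ^+ 2.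
Proof.
move=> _ _ _ _ G0 hC2 HG eps0 _ _ vreg_min wS v_vreg _ hC D0 eta_def i t tT.
have [vh [vhV Phivh]] := hC t tT.
have vreg_le := Psi_argmin_enorm_le eps0 (vreg_min t tT) vhV Phivh.
have v_le := enorm_sqr_le_dist (v_vreg t tT).
rewrite -mulrA -exprMn; apply: enorm_sqr_le_coord => j.
apply: le_trans (err_vec_coord_le j G0 (hC2 i) (HG i) (wS t tT)) _.
rewrite eta_def exprMn sqr_sqrtr ?ltW //.
have GD0 : 0 <= G * D ^+ 2 * eps by rewrite !mulr_ge0 ?sqr_ge0 ?ltW.
nra.
Qed.
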